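(* Let $G$ be a connected graph of order $n$ with maximum degree $\Delta\ge 3$. (i) If $2\Delta\le n-1$, then $$SO(G)\ge \Delta\left(\sqrt{\Delta^2+4}+\sqrt5\right)+2(n-2\Delta-1)\sqrt2,$$ with equality if and only if $G$ is a star-like tree of order $n$ with maximum degree $\Delta$ in which every neighbor of the maximum-degree vertex has degree two. (ii) If $2\Delta> n-1$, then $$SO(G)\ge (n-1-\Delta)\left(\sqrt{\Delta^2+4}+\sqrt5\right)+(2\Delta-n+1)\sqrt{\Delta^2+1},$$ with equality if and only if $G$ is a star-like tree of order $n$ with maximum degree $\Delta$ in which the maximum-degree vertex has exactly $2\Delta-n+1$ neighbors of degree one.
   Context: For a graph $G$, $d_G(w)$ denotes the degree of vertex $w$, and the Sombor index is $SO(G)=\sum_{ab\in E(G)}\sqrt{d_G(a)^2+d_G(b)^2}$. A star-like tree is a tree having exactly one vertex of degree greater than two. *)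

(* A simple graph is a symmetric irreflexive relation
   e : rel T on a finite vertex type T; its order is #|T|. *)
From mathcomp Require Import all_boot all_order all_algebra.
From mathcomp Require Import reals.
Set Implicit Arguments. Unset Strict Implicit. Unset Printing Implicit Defensive.
Import Order.TTheory GRing.Theory Num.Theory.

Section Graphs.
Variable T : finType.
Variable e : rel T.

Definition simple_graph : Prop := symmetric e /\ irreflexive e.

Definition deg (x : T) : nat := #|[pred y | e x y]|.

Definition maxdeg : nat := \max_(x : T) deg x.

Definition connected_graph : Prop := forall x y : T, connect e x y.

Definition has_cycle : Prop := exists c : seq T, (2 < size c)%N /\ ucycle e c.

Definition is_tree : Prop := connected_graph /\ ~ has_cycle.

Definition star_like_tree : Prop :=
  is_tree /\ #|[pred x | (2 < deg x)%N]| = 1%N.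

(* Sombor index: sum over edges ab of sqrt(d(a)^2 + d(b)^2).
   Each (unordered) edge ab appears twice as an ordered pair (a,b),(b,a),
   hence the factor 1/2. *)
Definition sombor (R : realType) : R :=
  (1 / 2) * \sum_(a : T) \sum_(b : T | e a b)
     Num.sqrt ((deg a)%:R ^+ 2 + (deg b)%:R ^+ 2).

End Graphs.

From mathcomp Require Import all_boot all_order all_algebra.
From mathcomp Require Import reals ring lra zify.
Import Order.TTheory GRing.Theory Num.Theory.
Set Implicit Arguments. Unset Strict Implicit. Unset Printing Implicit Defensive.

(* Fix a vertex v of maximum degree.  The graph-theoretic input is that a
   connected graph of order n has degree sum at least 2(n - 1), with equality
   exactly for trees (a breadth-first spanning tree rooted at v accounts for
   2(n - 1), a cycle forces one more edge, and an acyclic graph always has a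
   vertex of degree <= 1 that can be removed), and that no two vertices of
   degree one other than v are adjacent.

   The weight sqrt(d(a)^2 + d(b)^2) of every edge ab is then distributed to
   its ends: an edge at v goes entirely to its other end; otherwise each end
   of degree d receives share d (sqrt5 - sqrt2 for d = 1, d sqrt2 / 2 for
   d >= 2).  The leftovers are nonnegative and vanish when all vertices but v
   have degree <= 2.  What a vertex a <> v receives depends only on d(a) and
   on whether a ~ v; it is bounded below by al + be d(a) + ga [a ~ v] with
   be > 0, with explicit constants for each of the two parts of the theorem.
   Summing over a <> v and using the degree-sum bound yields the claimed
   bounds, and equality forces a tree in which every vertex bound is tight,
   which is the stated description of the extremal star-like trees. *)

Section SimpleGraph.
Variable T : finType.
Variable e : rel T.
Hypothesis esym : symmetric e.
Hypothesis eirr : irreflexive e.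

Lemma degE x : deg e x = \sum_y (e x y : nat).
Proof.
rewrite /deg -sum1_card big_mkcond /=; apply: eq_bigr => y _.
by rewrite inE; case: (e x y).
Qed.

Lemma deg_gt0 x y : e x y -> (0 < deg e x)%N.
Proof. by move=> exy; apply/card_gt0P; exists y. Qed.

Lemma deg1_neighbour x y z : deg e x = 1%N -> e x y -> e x z -> y = z.
Proof.
move=> dx exy exz; apply/eqP; apply: contraT => yz.
have : (#|pred2 y z| <= deg e x)%N.
  by apply: subset_leq_card; apply/subsetP => w; rewrite !inE => /orP [] /eqP ->.
by rewrite card2 yz dx.
Qed.

Lemma isolated_component x y : deg e x = 0%N -> connect e y x -> y = x.
Proof.
move=> dx yx; apply/eqP; rewrite -[y == x]/(y \in pred1 x).
have notx a b : e a b -> a != x.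
  by move=> /deg_gt0; apply: contraTneq => ->; rewrite dx.
rewrite (closed_connect _ yx) ?inE //= => a b eab.
rewrite -!topredE /= (negbTE (notx _ _ eab)).
by rewrite esym in eab; rewrite (negbTE (notx _ _ eab)).
Qed.

Lemma leaf_edge_component a b y : e a b -> deg e a = 1%N -> deg e b = 1%N ->
  connect e y a -> (y == a) || (y == b).
Proof.
move=> eab da db ya; rewrite -[_ || _]/(y \in pred2 a b).
have stay u w : e u w -> u \in pred2 a b -> w \in pred2 a b.
  move=> euw; rewrite !inE => /orP [] /eqP eu; rewrite {}eu in euw.
  - by rewrite (deg1_neighbour da euw eab) eqxx orbT.
  - by rewrite (deg1_neighbour db euw (_ : e b a)) ?eqxx // esym.
rewrite (closed_connect _ ya) ?inE ?eqxx // => u w euw.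
by apply/idP/idP; apply: stay; rewrite // esym.
Qed.

Lemma sum_del (S : {set T}) x (F : T -> nat) : x \in S ->
  \sum_(y in S) F y = F x + \sum_(y in S :\ x) F y.
Proof.
move=> xS; rewrite (bigD1 x) //=; congr (_ + _).
by apply: eq_bigl => y; rewrite in_setD1 andbC.
Qed.

Definition deg_in (S : {set T}) x := \sum_(y in S) (e x y : nat).

Lemma deg_in_gt0 S x : (0 < deg_in S x)%N -> exists2 y, y \in S & e x y.
Proof.
rewrite lt0n => pos; apply/exists_inP; apply: contraNT pos => /exists_inPn noadj.
by apply/eqP; rewrite /deg_in big1 // => y /noadj /negbTE ->.
Qed.

Lemma neighbour_avoiding S x w : (1 < deg_in S x)%N ->
  exists y, [/\ y \in S, e x y & y != w].
Proof.
move=> dx; case: (boolP (w \in S)) => wS.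
  have /deg_in_gt0 [y /setD1P [yw yS] exy] : (0 < deg_in (S :\ w) x)%N.
    by move: dx; rewrite /deg_in (sum_del _ wS); case: (e x w) => /=; lia.
  by exists y.
have /deg_in_gt0 [y yS exy] : (0 < deg_in S x)%N by apply: ltnW.
by exists y; split => //; apply: contraNneq wS => <-.
Qed.

Definition simple_path_in (S : {set T}) (q : seq T) :=
  if q is l :: r then [&& path e l r, uniq q & all [in S] q] else false.

(* Simple paths have at most n vertices, so a longest one exists. *)
Lemma simple_path_size S q : simple_path_in S q -> (size q <= #|T|)%N.
Proof. by case: q => [|l r] // /and3P [_ /card_uniqP <- _]; apply: max_card. Qed.

Lemma close_cycle l w r y :
  path e w r -> e l w -> uniq [:: l, w & r] -> y \in r -> e l y -> has_cycle e.
Proof.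
move=> Hp elw Hu yr ely.
have yidx : (index y r < size r)%N by rewrite index_mem.
exists [:: l, w & take (index y r).+1 r]; split.
  by rewrite /= size_take; case: ifP => // _; case: (r) yr.
apply/andP; split; last by have := take_uniq (index y r).+3 Hu.
rewrite /cycle /= elw /= (take_nth y yidx) nth_index // rcons_path last_rcons.
rewrite esym ely andbT.
by have := take_path (index y r).+1 Hp; rewrite (take_nth y yidx) nth_index.
Qed.

(* If every vertex of a nonempty set S has two neighbours in S, the graph
   has a cycle: the first vertex of a longest simple path in S has a
   neighbour other than its successor, which must lie further on the path. *)
Lemma cycle_of_min_deg2 (S : {set T}) : S != set0 ->
  (forall x, x \in S -> 1 < deg_in S x)%N -> has_cycle e.
Proof.
move=> /set0Pn [x0 x0S] Hdeg.
pose P k := [exists t : k.-tuple T, simple_path_in S t].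
have P1 : P 1%N by apply/existsP; exists [tuple x0]; rewrite /= x0S.
have Pbound k : P k -> (k <= #|T|)%N.
  by case/existsP=> t /simple_path_size; rewrite size_tuple.
case: (ex_maxnP (ex_intro P 1%N P1) Pbound) => K /existsP [t Ht] Kmax.
case Et: (tval t) Ht => [|l r] //= /and3P [Hp Hu Hall].
have lS : l \in S by move: Hall => /andP [].
have [y [yS ely ynw]] := neighbour_avoiding (head l r) (Hdeg l lS).
have ynl : y != l by apply: contraTneq ely => ->; rewrite eirr.
case: (boolP (y \in l :: r)) => yin; last first.
  have : P K.+1.
    have Hs : size [:: y, l & r] == K.+1 by have := size_tuple t; rewrite Et => /= ->.
    apply/existsP; exists (Tuple Hs).
    by rewrite /= esym ely Hp yin yS /=; move: Hu Hall => /= -> ->.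
  by move/Kmax; rewrite ltnn.
case: r {Et Hall} Hp Hu ynw yin => [|w r] /=; first by rewrite inE (negbTE ynl).
move=> /andP [elw Hp] Hu ynw; rewrite !inE (negbTE ynl) (negbTE ynw) /= => yr.
exact: close_cycle Hp elw Hu yr ely.
Qed.

(* Twice the number of edges inside S. *)
Definition edges_in (S : {set T}) := \sum_(x in S) deg_in S x.

Lemma edges_in_del (S : {set T}) x : x \in S ->
  edges_in S = edges_in (S :\ x) + 2 * deg_in S x.
Proof.
move=> xS; rewrite /edges_in /deg_in (sum_del _ xS).
have -> : \sum_(z in S :\ x) \sum_(y in S) (e z y : nat) =
          \sum_(z in S :\ x) (e x z : nat) +
          \sum_(z in S :\ x) \sum_(y in S :\ x) (e z y : nat).
  by rewrite -big_split /=; apply: eq_bigr => z _; rewrite (sum_del _ xS) esym.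
rewrite [\sum_(y in S) _](sum_del _ xS) eirr; lia.
Qed.

(* An acyclic graph has fewer edges than vertices on every nonempty vertex
   set: repeatedly delete a vertex with at most one neighbour. *)
Lemma acyclic_edges_in : ~ has_cycle e -> forall S : {set T}, S != set0 ->
  ((edges_in S).+2 <= 2 * #|S|)%N.
Proof.
move=> nc S; move: {2}#|S| (erefl #|S|) => n; elim: n S => [|n IH] S HS Sne.
  by move: Sne; rewrite -card_gt0 HS.
have [x xS dx] : exists2 x, x \in S & (deg_in S x <= 1)%N.
  apply/exists_inP; apply: contraT => /exists_inPn small; case: nc.
  by apply: (cycle_of_min_deg2 Sne) => x /small; rewrite -ltnNge.
have HS' : #|S :\ x| = n by move: HS; rewrite (cardsD1 x S) xS add1n => -[].
rewrite (edges_in_del xS) HS.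
case: (eqVneq (S :\ x) set0) => [E|Ne]; last by have := IH _ HS' Ne; lia.
have -> : deg_in S x = 0%N by rewrite /deg_in (sum_del _ xS) E big_set0 eirr.
by move: HS'; rewrite /edges_in E big_set0 cards0 => <-.
Qed.

Lemma acyclic_deg_sum : ~ has_cycle e -> (0 < #|T|)%N ->
  ((\sum_x deg e x).+2 <= 2 * #|T|)%N.
Proof.
move=> nc Tn; have Ne : [set: T] != set0 by rewrite -card_gt0 cardsT.
have := acyclic_edges_in nc Ne; rewrite cardsT /edges_in /deg_in.
have -> // : \sum_x deg e x = \sum_(x in [set: T]) \sum_(y in [set: T]) (e x y : nat).
by apply: eq_big => [x|x _]; rewrite ?inE // degE; apply: eq_bigl => y; rewrite inE.
Qed.

Section BreadthFirstTree.
Variable v : T.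
Hypothesis conn : forall x, connect e v x.

Definition reach k x := [exists t : k.-tuple T, path e v t && (last v t == x)].

Lemma reach_of_seq (p : seq T) x : path e v p -> last v p = x -> reach (size p) x.
Proof.
by move=> Hp Hl; apply/existsP; exists (in_tuple p); rewrite /= Hp Hl eqxx.
Qed.

Lemma ex_reach x : exists k, reach k x.
Proof. by case/connectP: (conn x) => p Hp Hl; exists (size p); apply: reach_of_seq. Qed.

Definition dist x := ex_minn (ex_reach x).

Lemma dist_reach x : reach (dist x) x.
Proof. by rewrite /dist; case: ex_minnP. Qed.

Lemma dist_min x k : reach k x -> (dist x <= k)%N.
Proof. by rewrite /dist; case: ex_minnP => m _ H /H. Qed.

Lemma dist_edge x y : e y x -> (dist x <= (dist y).+1)%N.
Proof.
move=> eyx; have /existsP [t /andP [Hp /eqP Hl]] := dist_reach y.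
apply: dist_min; rewrite -(size_tuple t) -(size_rcons t x).
by apply: reach_of_seq; rewrite ?last_rcons // rcons_path Hp Hl eyx.
Qed.

Lemma dist_pred x : x != v -> exists y, e x y /\ (dist y).+1 = dist x.
Proof.
move=> xv; have /existsP [t /andP [Hp /eqP Hl]] := dist_reach x.
have St := size_tuple t.
move: Hp Hl St; case/lastP: (tval t) => [|p z]; first by move=> _ /= E; rewrite E eqxx in xv.
rewrite rcons_path last_rcons size_rcons => /andP [Hp ez] Ez Sz.
exists (last v p); split; first by rewrite esym -Ez.
have H1 := dist_min (reach_of_seq Hp erefl).
have H2 := dist_edge ez; rewrite Ez in H2.
lia.
Qed.

(* The parent of x in a breadth-first spanning tree rooted at v. *)
Definition par x := odflt x [pick y | e x y && ((dist y).+1 == dist x)].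

Lemma par_spec x : x != v -> e x (par x) /\ (dist (par x)).+1 = dist x.
Proof.
move=> xv; rewrite /par; case: pickP => [y /andP [? /eqP ?]|H] //=.
have [y [exy dy]] := dist_pred xv.
by move: (H y); rewrite exy dy eqxx.
Qed.

Definition non_tree x y :=
  ~~ ((x != v) && (par x == y)) && ~~ ((y != v) && (par y == x)).

Definition children x := \sum_y ((y != v) && (par y == x) : nat).

Lemma deg_tree_lb x z (b : bool) : (b -> e x z && non_tree x z) ->
  ((x != v) + children x + b <= deg e x)%N.
Proof.
move=> Hb; rewrite degE /children.
have E1 : (x != v : nat) = \sum_y ((x != v) && (y == par x) : nat).
  rewrite (bigD1 (par x)) //= eqxx andbT big1 ?addn0 // => y ynp.
  by rewrite (negbTE ynp) andbF.
have E2 : (b : nat) = \sum_y (b && (y == z) : nat).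
  rewrite (bigD1 z) //= eqxx andbT big1 ?addn0 // => y ynp.
  by rewrite (negbTE ynp) andbF.
rewrite E1 E2 -!big_split /=; apply: leq_sum => y _.
case: (boolP ((y != v) && (par y == x))) => [/andP [yv /eqP pyx]|H1].
  have [eyp dy] := par_spec yv; rewrite pyx in eyp dy.
  have -> : ((x != v) && (y == par x)) = false.
    apply/negbTE; apply/negP => /andP [xv /eqP ypx].
    have [_ dx] := par_spec xv; rewrite -ypx in dx; lia.
  have -> : (b && (y == z)) = false.
    apply/negbTE; apply/negP => /andP [bb /eqP yz].
    move: (Hb bb) => /andP [_ /andP [_ /negP Hn]]; apply: Hn; by rewrite -yz yv pyx eqxx.
  by rewrite esym eyp.
case: (boolP ((x != v) && (y == par x))) => [/andP [xv /eqP ypx]|H2].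
  have -> : (b && (y == z)) = false.
    apply/negbTE; apply/negP => /andP [bb /eqP yz].
    move: (Hb bb) => /andP [_ /andP [/negP Hn _]]; apply: Hn; by rewrite -yz xv ypx eqxx.
  have [exp _] := par_spec xv; by rewrite ypx exp.
case: (boolP (b && (y == z))) => [/andP [bb /eqP yz]|H3] //.
by move: (Hb bb) => /andP [exz _]; rewrite yz exz.
Qed.

Lemma sum_children : \sum_x children x = #|T|.-1.
Proof.
rewrite /children exchange_big /= -(cardC1 v) -sum1_card [RHS]big_mkcond /=.
apply: eq_bigr => y _; rewrite (bigD1 (par y)) //= eqxx andbT big1 ?addn0 ?inE //.
by move=> x; rewrite eq_sym => /negbTE ->; rewrite andbF.
Qed.

Lemma sum_non_root : \sum_x (x != v : nat) = #|T|.-1.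
Proof.
rewrite -(cardC1 v) -sum1_card [RHS]big_mkcond /=.
by apply: eq_bigr => x _; rewrite inE; case: (x != v).
Qed.

Lemma connected_deg_sum : (2 * #|T|.-1 <= \sum_x deg e x)%N.
Proof.
have : (\sum_x ((x != v : nat) + children x + false) <= \sum_x deg e x)%N.
  by apply: leq_sum => x _; apply: (deg_tree_lb (z := x)).
move=> H; rewrite !big_split /= sum_children sum_non_root big1_eq in H; lia.
Qed.

Lemma non_tree_deg_sum x0 y0 : e x0 y0 -> non_tree x0 y0 ->
  (2 * #|T| <= \sum_x deg e x)%N.
Proof.
move=> exy nt.
have xy : x0 != y0 by apply: contraTneq exy => ->; rewrite eirr.
have : (\sum_x ((x != v : nat) + children x + ((x == x0) || (x == y0)))
          <= \sum_x deg e x)%N.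
  apply: leq_sum => x _.
  case: (eqVneq x x0) => [->|xn0]; first by apply: (deg_tree_lb (z := y0)) => _; rewrite exy nt.
  case: (eqVneq x y0) => [->|xn1]; last by apply: (deg_tree_lb (z := x)).
  by apply: (deg_tree_lb (z := x0)) => _; rewrite esym exy; move: nt; rewrite /non_tree andbC.
rewrite !big_split /= sum_children sum_non_root.
have -> : \sum_x ((x == x0) || (x == y0) : nat) = 2%N.
  rewrite (bigD1 x0) //= eqxx (bigD1 y0) /=; last by rewrite eq_sym.
  rewrite eqxx orbT big1 // => x /andP [xn1 xn0].
  by rewrite (negbTE xn0) (negbTE xn1).
have : (0 < #|T|)%N by apply/card_gt0P; exists v.
case: #|T| => // n _ /=; lia.
Qed.

(* A cycle contains a non-tree edge: at a vertex x of the cycle farthest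
   from v, the two cycle edges cannot both lead to the parent of x. *)
Lemma cycle_deg_sum : has_cycle e -> (2 * #|T| <= \sum_x deg e x)%N.
Proof.
move=> [c [Hs Hc]].
have [x0 x0c] : exists x0, x0 \in c by case: (c) Hs => // x0 c' _; exists x0; rewrite mem_head.
case: (@arg_maxnP T x0 [in c] dist x0c) => x xc Hx.
case: (rot_to xc) => i s Er.
have := Hc; rewrite -(rot_ucycle i) Er => /andP [Hcy Hu].
have Hsz : (2 <= size s)%N by move: Hs; rewrite -(size_rot i) Er.
move: Hcy Hu Hsz; case: s Er => [|a s] // Er; case/lastP: s Er => [|s b] // Er.
rewrite /cycle /= rcons_path last_rcons => /andP [exa /andP [_ ebx]].
move=> /andP [_ /andP [ans _]] _.
have anb : a != b by apply: contraNneq ans => ->; rewrite mem_rcons mem_head.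
have da : (dist a <= dist x)%N by apply: Hx; rewrite -(mem_rot i) Er !inE eqxx orbT.
have db : (dist b <= dist x)%N.
  by apply: Hx; rewrite -(mem_rot i) Er !inE mem_rcons mem_head !orbT.
case: (boolP (non_tree x a)) => [nt|na]; first exact: non_tree_deg_sum exa nt.
case: (boolP (non_tree x b)) => [nt|nb].
  by apply: (non_tree_deg_sum (x0 := x) (y0 := b)) => //; rewrite esym.
have not_child y : (dist y <= dist x)%N -> (y != v) && (par y == x) = false.
  move=> dy; apply/negbTE/negP => /andP [yv /eqP pyx].
  by have [_ d] := par_spec yv; rewrite pyx in d; lia.
have parent y : (dist y <= dist x)%N -> ~~ non_tree x y -> par x = y.
  by move=> dy; rewrite /non_tree not_child // andbT negbK => /andP [_ /eqP].
by move: anb; rewrite -(parent a) // -(parent b) // eqxx.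
Qed.

End BreadthFirstTree.
End SimpleGraph.

Section ConnectedGraph.
Variables (T : finType) (e : rel T).
Hypotheses (esym : symmetric e) (eirr : irreflexive e).

Lemma tree_iff_deg_sum (v : T) : connected_graph e ->
  is_tree e <-> (\sum_x deg e x = 2 * #|T|.-1)%N.
Proof.
move=> conn; have Tn : (0 < #|T|)%N by apply/card_gt0P; exists v.
have lb := connected_deg_sum esym (conn v).
split => [[_ nc] | Hsum]; first by have := acyclic_deg_sum esym eirr nc Tn; lia.
by split=> // /(cycle_deg_sum esym eirr (conn v)); rewrite Hsum; lia.
Qed.

Variable v : T.
Hypothesis conn : forall x, connect e v x.

Lemma deg_pos x : x != v -> (0 < deg e x)%N.
Proof.
move=> xv; rewrite lt0n; apply: contraNN xv => /eqP d0.
by rewrite (isolated_component esym d0 (conn x)).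
Qed.

Lemma no_adjacent_leaves a b : a != v -> b != v -> e a b ->
  deg e a = 1%N -> deg e b = 1%N -> False.
Proof.
move=> av bv eab da db; have := leaf_edge_component esym eab da db (conn a).
by rewrite ![v == _]eq_sym (negbTE av) (negbTE bv).
Qed.

End ConnectedGraph.

Local Open Scope ring_scope.

Section Weights.
Variable R : realType.

Definition s2 : R := Num.sqrt 2.
Definition s5 : R := Num.sqrt 5.

Definition sw (a b : nat) : R := Num.sqrt (a%:R ^+ 2 + b%:R ^+ 2).

(* The share of an edge weight claimed by an end of degree d (away from the
   maximum-degree vertex); two shares never exceed the weight of the edge. *)
Definition share (d : nat) : R := if d == 1%N then s5 - s2 else d%:R * s2 / 2.

Lemma sqrt_ge (p q : R) : 0 <= p -> p ^+ 2 <= q -> p <= Num.sqrt q.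
Proof. by move=> p0 pq; have := ler_wsqrtr pq; rewrite sqrtr_sqr ger0_norm. Qed.

Lemma sq_eq (p q : R) : 0 <= p -> 0 <= q -> p ^+ 2 = q ^+ 2 -> p = q.
Proof. by move=> p0 q0 /(congr1 Num.sqrt); rewrite !sqrtr_sqr !ger0_norm. Qed.

Lemma s2_ge0 : 0 <= s2. Proof. exact: sqrtr_ge0. Qed.
Lemma s5_ge0 : 0 <= s5. Proof. exact: sqrtr_ge0. Qed.
Lemma s2_sq : s2 ^+ 2 = 2. Proof. by rewrite sqr_sqrtr. Qed.
Lemma s5_sq : s5 ^+ 2 = 5. Proof. by rewrite sqr_sqrtr. Qed.

(* Rational enclosures of sqrt 2 and sqrt 5, enough for all the numeric
   comparisons below. *)
Lemma s2_bnd : 707 <= 500 * s2 /\ 500 * s2 <= 708.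
Proof. have := s2_ge0; have := s2_sq; split; nra. Qed.
Lemma s5_bnd : 2236 <= 1000 * s5 /\ 1000 * s5 <= 2237.
Proof. have := s5_ge0; have := s5_sq; split; nra. Qed.

Lemma sw_ge0 a b : 0 <= sw a b. Proof. exact: sqrtr_ge0. Qed.
Lemma sw_sq a b : sw a b ^+ 2 = a%:R ^+ 2 + b%:R ^+ 2.
Proof. by rewrite sqr_sqrtr // addr_ge0 // sqr_ge0. Qed.
Lemma sw_sym a b : sw a b = sw b a. Proof. by rewrite /sw addrC. Qed.
Lemma sw_ge a b : a%:R <= sw a b.
Proof. by apply: sqrt_ge; rewrite ?ler0n // lerDl sqr_ge0. Qed.

Lemma sw_mono a a' b : (a <= a')%N -> sw a b <= sw a' b.
Proof.
move=> le_aa'; apply: ler_wsqrtr; rewrite lerD2r.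
have h1 : a%:R <= a'%:R :> R by rewrite ler_nat.
have h0 : 0 <= a%:R :> R := ler0n _ _.
nra.
Qed.

Lemma sw_gap D : (3 <= D)%N -> 0 < sw 2 D - sw 1 D /\ sw 2 D - sw 1 D <= 1/2.
Proof.
move=> HD; have x3 : (3 : R) <= D%:R by rewrite (ler_nat R 3).
have := sw_sq 2 D; have := sw_sq 1 D; have := sw_ge0 2 D; have := sw_ge0 1 D.
have := sw_ge D 1; rewrite sw_sym /= => *; split; nra.
Qed.

Lemma share1 : share 1 = s5 - s2. Proof. by []. Qed.
Lemma shareE d : (2 <= d)%N -> share d = d%:R * s2 / 2.
Proof. by rewrite /share; case: d => [|[|d]]. Qed.

Lemma sw12 : sw 1 2 = s5.
Proof. by rewrite /sw /s5; congr Num.sqrt; rewrite -!natrX -natrD. Qed.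

Lemma sw22 : sw 2 2 = 2 * s2.
Proof.
apply: sq_eq; [exact: sw_ge0 | by rewrite mulr_ge0 ?s2_ge0 |].
by rewrite sw_sq exprMn s2_sq -!natrX -!natrD -natrM.
Qed.

Lemma share_edge_le da db : (1 <= da)%N -> (1 <= db)%N ->
  ~~ ((da == 1%N) && (db == 1%N)) -> share da + share db <= sw da db.
Proof.
have s2b := s2_bnd; have s5b := s5_bnd; have s2s := s2_sq; have s20 := s2_ge0.
wlog: da db / (da <= db)%N.
  move=> W H1 H2 H3; case: (leqP da db) => Hd; first exact: W.
  by rewrite addrC sw_sym; apply: W => //; [exact: ltnW | rewrite andbC].
move=> Hle H1 H2 H3.
case: (eqVneq da 1%N) => [Ea|Na].
  subst da; rewrite share1.
  case: (eqVneq db 2%N) => [->|Nb]; first by rewrite shareE // sw12; lra.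
  have Hb : (3 <= db)%N by move: H3 Nb; rewrite eqxx /=; case: db H2 {Hle} => [|[|[|]]].
  rewrite shareE; last exact: ltnW.
  have x3 : (3 : R) <= db%:R by rewrite (ler_nat R 3).
  have := sw_ge db 1; rewrite sw_sym; nra.
have Ha : (2 <= da)%N by case: da H1 Na {Hle H3} => [|[|]].
rewrite !shareE //; last exact: leq_trans Hle.
have x0 : 0 <= da%:R :> R := ler0n _ _. have y0 : 0 <= db%:R :> R := ler0n _ _.
apply: sqrt_ge; first nra.
have -> : (da%:R * s2 / 2 + db%:R * s2 / 2) ^+ 2 = s2 ^+ 2 * (da%:R + db%:R) ^+ 2 / 4 :> R.
  by field.
rewrite s2s; have := sqr_ge0 (da%:R - db%:R : R); lra.
Qed.

Lemma share_edge_eq da db : (da == 1%N) || (da == 2%N) -> (db == 1%N) || (db == 2%N) ->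
  ~~ ((da == 1%N) && (db == 1%N)) -> share da + share db = sw da db.
Proof.
move=> /orP [/eqP->|/eqP->] /orP [/eqP->|/eqP->] //= _.
- by rewrite share1 shareE // sw12; lra.
- by rewrite share1 shareE // sw_sym sw12; lra.
- by rewrite shareE // sw22; lra.
Qed.

(* The total weight received by a vertex of degree d other than the maximum
   degree vertex (of degree D): the share of each of its edges, except that
   an edge to the maximum degree vertex is received entirely. *)
Definition vertex_weight (D : nat) (adj : bool) (d : nat) : R :=
  d%:R * share d + (adj : nat)%:R * (sw d D - share d).

Definition affine (al be ga : R) (adj : bool) (d : nat) : R :=
  al + be * d%:R + (adj : nat)%:R * ga.

(* The sum of the affine bounds over a tree of order n with a vertex of
   degree D (whose other vertices have degree sum 2(n-1) - D). *)
Definition affine_total (al be ga : R) (n D : nat) : R :=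
  al * (n%:R - 1) + be * (2 * (n%:R - 1) - D%:R) + ga * D%:R.

Lemma sw2E D : sw 2 D = Num.sqrt (D%:R ^+ 2 + 4).
Proof. by rewrite /sw addrC; congr (Num.sqrt (_ + _)); rewrite -natrX. Qed.
Lemma sw1E D : sw 1 D = Num.sqrt (D%:R ^+ 2 + 1).
Proof. by rewrite /sw addrC expr1n. Qed.

Section FirstCase.
Variable D : nat.
Hypothesis HD : (3 <= D)%N.

(* Constants of the affine bound for 2D <= n - 1, tight exactly for
   neighbours of v of degree 2 and non-neighbours of degree 1 or 2. *)
Definition alpha1 : R := 2 * s5 - 4 * s2.
Definition beta1 : R := 3 * s2 - s5.
Definition gamma1 : R := sw 2 D - s2.

Lemma bound1_nonadj d : affine alpha1 beta1 gamma1 false d <= vertex_weight D false d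
  ?= iff (d == 1%N) || (d == 2%N).
Proof.
have s2b := s2_bnd; have s5b := s5_bnd; have s2s := s2_sq; have s20 := s2_ge0.
rewrite /vertex_weight /affine /alpha1 /beta1 /= !mul0r !addr0; apply/leifP.
case: d => [|[|[|d]]] /=.
- by rewrite mul0r; lra.
- by rewrite share1; apply/eqP; lra.
- by rewrite shareE //; apply/eqP; lra.
rewrite shareE //; set x := (d.+3)%:R : R.
have x3 : (3 : R) <= x by rewrite /x (ler_nat R 3).
have H : x * (x * s2) >= 3 * (x * s2) by nra.
nra.
Qed.

Lemma bound1_adj d : (1 <= d)%N ->
  affine alpha1 beta1 gamma1 true d <= vertex_weight D true d ?= iff (d == 2%N).
Proof.
move=> d1; have s2b := s2_bnd; have s5b := s5_bnd; have s2s := s2_sq.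
have s20 := s2_ge0; have [f1 f2] := sw_gap HD.
rewrite /vertex_weight /affine /alpha1 /beta1 /gamma1 /= !mul1r; apply/leifP.
case: d d1 => [|[|[|d]]] //= _.
- by rewrite share1; lra.
- by rewrite shareE //; apply/eqP; lra.
rewrite shareE //; set x := (d.+3)%:R : R.
have x3 : (3 : R) <= x by rewrite /x (ler_nat R 3).
have Fm : sw 2 D <= sw d.+3 D by apply: sw_mono.
have H : x * (x * s2) >= 3 * (x * s2) by nra.
nra.
Qed.

Lemma total1E n :
  affine_total alpha1 beta1 gamma1 n D =
  D%:R * (Num.sqrt (D%:R ^+ 2 + 4) + Num.sqrt 5) + 2 * (n%:R - 2 * D%:R - 1) * Num.sqrt 2.
Proof. by rewrite /affine_total /alpha1 /beta1 /gamma1 sw2E /s2 /s5; ring. Qed.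
End FirstCase.

Section SecondCase.
Variable D : nat.
Hypothesis HD : (3 <= D)%N.

(* Constants of the affine bound for 2D > n - 1, tight exactly for
   neighbours of v of degree at most 2 and non-neighbours of degree 1. *)
Definition beta2 : R := sw 2 D + s2 - sw 1 D.
Definition alpha2 : R := s5 - s2 - beta2.
Definition gamma2 : R := sw 1 D - s5 + s2.

Lemma bound2_nonadj d :
  affine alpha2 beta2 gamma2 false d <= vertex_weight D false d ?= iff (d == 1%N).
Proof.
have s2b := s2_bnd; have s5b := s5_bnd; have s2s := s2_sq; have s20 := s2_ge0.
have [f1 f2] := sw_gap HD.
rewrite /vertex_weight /affine /alpha2 /beta2 /= !mul0r !addr0; apply/leifP.
case: d => [|[|[|d]]] /=.
- by rewrite mul0r; lra.
- by rewrite share1; apply/eqP; lra.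
- by rewrite shareE //; lra.
rewrite shareE //; set x := (d.+3)%:R : R.
have x3 : (3 : R) <= x by rewrite /x (ler_nat R 3).
have H : x * (x * s2) >= 3 * (x * s2) by nra.
nra.
Qed.

Lemma bound2_adj d : (1 <= d)%N ->
  affine alpha2 beta2 gamma2 true d <= vertex_weight D true d ?= iff (d <= 2)%N.
Proof.
move=> d1; have s2b := s2_bnd; have s5b := s5_bnd; have s2s := s2_sq.
have s20 := s2_ge0; have [f1 f2] := sw_gap HD.
rewrite /vertex_weight /affine /alpha2 /beta2 /gamma2 /= !mul1r; apply/leifP.
case: d d1 => [|[|[|d]]] //= _.
- by rewrite share1; apply/eqP; lra.
- by rewrite shareE //; apply/eqP; lra.
rewrite shareE //; set x := (d.+3)%:R : R.
have x3 : (3 : R) <= x by rewrite /x (ler_nat R 3).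
have Fm : sw 1 D <= sw d.+3 D by apply: sw_mono.
have H : x * (x * s2) >= 3 * (x * s2) by nra.
nra.
Qed.

Lemma total2E n :
  affine_total alpha2 beta2 gamma2 n D =
  (n%:R - 1 - D%:R) * (Num.sqrt (D%:R ^+ 2 + 4) + Num.sqrt 5)
   + (2 * D%:R - n%:R + 1) * Num.sqrt (D%:R ^+ 2 + 1).
Proof. by rewrite /affine_total /alpha2 /beta2 /gamma2 sw2E sw1E /s2 /s5; ring. Qed.
End SecondCase.

End Weights.

Section Decomposition.
Variable R : realType.
Variables (T : finType) (e : rel T).
Hypotheses (esym : symmetric e) (eirr : irreflexive e).
Variable v : T.
Hypothesis conn : forall x, connect e v x.

Local Notation D := (deg e v).
Local Notation n := #|T|.

Definition portion (a b : T) : R :=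
  if a == v then 0 else if b == v then sw R (deg e a) D else share R (deg e a).

Definition leftover (a b : T) : R := sw R (deg e a) (deg e b) - portion a b - portion b a.

Lemma sum_portion a : \sum_(b | e a b) portion a b =
  if a == v then 0 else vertex_weight R D (e a v) (deg e a).
Proof.
rewrite /portion; case: (a == v); first by rewrite big1.
have -> : \sum_(b | e a b) (if b == v then sw R (deg e a) D else share R (deg e a)) =
   \sum_(b | e a b) (share R (deg e a) + (b == v : nat)%:R * (sw R (deg e a) D - share R (deg e a))).
  by apply: eq_bigr => b _; case: (b == v) => /=; rewrite ?mul1r ?mul0r; ring.
rewrite big_split /= -mulr_suml sumr_const.
have -> : \sum_(b | e a b) (b == v : nat)%:R = (e a v : nat)%:R :> R.
  rewrite -natr_sum; congr (_ %:R); case Eav: (e a v).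
    by rewrite (bigD1 v) //= eqxx big1 // => b /andP [_ /negbTE ->].
  by rewrite big1 // => b eab; case: eqP => // Ebv; rewrite -Ebv eab in Eav.
by rewrite /vertex_weight /deg !mulr_natl.
Qed.

Lemma sombor_split : sombor e R =
  \sum_(a | a != v) vertex_weight R D (e a v) (deg e a)
  + (1/2) * \sum_a \sum_(b | e a b) leftover a b.
Proof.
have -> : \sum_a \sum_(b | e a b) leftover a b =
  \sum_a \sum_(b | e a b) sw R (deg e a) (deg e b) - \sum_a \sum_(b | e a b) portion a b
   - \sum_a \sum_(b | e a b) portion b a.
  by rewrite -!sumrB; apply: eq_bigr => a _; rewrite -!sumrB.
have -> : \sum_a \sum_(b | e a b) portion b a = \sum_a \sum_(b | e a b) portion a b.
  rewrite (exchange_big_dep predT) //=; apply: eq_bigr => a _.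
  by apply: eq_bigl => b; rewrite esym.
have -> : \sum_a \sum_(b | e a b) portion a b =
          \sum_(a | a != v) vertex_weight R D (e a v) (deg e a).
  rewrite (bigD1 v) //= sum_portion eqxx add0r; apply: eq_bigr => a av.
  by rewrite sum_portion (negbTE av).
rewrite /sombor /sw; lra.
Qed.

(* Leftovers are nonnegative, since two vertices of degree one other than v
   are never adjacent. *)
Lemma leftover_ge0 a b : e a b -> 0 <= leftover a b.
Proof.
move=> eab; rewrite /leftover /portion.
case: (eqVneq a v) => [Ea|av].
  have bv : b != v by apply: contraTneq eab => ->; rewrite Ea eirr.
  by rewrite Ea (negbTE bv) sw_sym subr0 subrr.
case: (eqVneq b v) => [->|bv]; first by rewrite subr0 subrr.
have := share_edge_le R (deg_pos esym conn av) (deg_pos esym conn bv).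
have -> : ~~ ((deg e a == 1%N) && (deg e b == 1%N)).
  by apply/negP => /andP [/eqP da /eqP db]; apply: (no_adjacent_leaves esym conn av bv eab da db).
by move=> /(_ isT); lra.
Qed.

Lemma half_leftovers_ge0 : 0 <= (1/2) * \sum_a \sum_(b | e a b) leftover a b.
Proof.
apply: mulr_ge0; first lra.
by apply: sumr_ge0 => a _; apply: sumr_ge0 => b; exact: leftover_ge0.
Qed.

Lemma leftover_eq0 a b : (forall x, x != v -> deg e x <= 2)%N -> e a b ->
  leftover a b = 0.
Proof.
move=> H2 eab; rewrite /leftover /portion.
case: (eqVneq a v) => [Ea|av].
  have bv : b != v by apply: contraTneq eab => ->; rewrite Ea eirr.
  by rewrite Ea (negbTE bv) sw_sym subr0 subrr.
case: (eqVneq b v) => [->|bv]; first by rewrite subr0 subrr.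
have small x : x != v -> (deg e x == 1%N) || (deg e x == 2%N).
  by move=> xv; have := H2 x xv; have := deg_pos esym conn xv; case: (deg e x) => [|[|[|]]].
have := share_edge_eq R (small a av) (small b bv).
have -> : ~~ ((deg e a == 1%N) && (deg e b == 1%N)).
  by apply/negP => /andP [/eqP da /eqP db]; apply: (no_adjacent_leaves esym conn av bv eab da db).
by move=> /(_ isT); lra.
Qed.

Lemma sum_affine (al be ga : R) :
  \sum_(a | a != v) affine al be ga (e a v) (deg e a) =
  al * (n%:R - 1) + be * ((\sum_a deg e a)%:R - D%:R) + ga * D%:R.
Proof.
have Tn : (0 < n)%N by apply/card_gt0P; exists v.
rewrite /affine !big_split /= -!mulr_sumr -mulr_suml sumr_const cardC1 -[al *+ _]mulr_natr.
have -> : (n.-1 : nat)%:R = n%:R - 1 :> R by rewrite -[in RHS](prednK Tn) -natr1 addrK.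
have -> : \sum_(a | a != v) (deg e a)%:R = (\sum_a deg e a)%:R - D%:R :> R.
  by rewrite natr_sum [in RHS](bigD1 v) //= addrC addrK.
have -> : \sum_(a | a != v) (e a v : nat)%:R = D%:R :> R.
  rewrite -natr_sum degE; congr (_ %:R).
  by rewrite [RHS](bigD1 v) //= eirr add0n; apply: eq_bigr => a _; rewrite esym.
by rewrite mulr_natr; ring.
Qed.

Section AffineBound.
Variables (al be ga : R) (P : bool -> nat -> bool).
Hypothesis be_gt0 : 0 < be.
Hypothesis vertex_bound : forall a, a != v ->
  affine al be ga (e a v) (deg e a) <= vertex_weight R D (e a v) (deg e a)
  ?= iff P (e a v) (deg e a).

Local Notation total := (affine_total al be ga n D).

Lemma total_leif : total <= \sum_(a | a != v) vertex_weight R D (e a v) (deg e a)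
  ?= iff ((\sum_a deg e a == 2 * n.-1)%N && [forall (a | a != v), P (e a v) (deg e a)]).
Proof.
apply: leif_trans (leif_sum vertex_bound); rewrite sum_affine /affine_total.
have Tn : (0 < n)%N by apply/card_gt0P; exists v.
have lb := connected_deg_sum esym conn.
have n1 : (n.-1 : nat)%:R = n%:R - 1 :> R by rewrite -[in RHS](prednK Tn) -natr1 addrK.
apply/leifP; case: eqP => [-> | ne].
  by rewrite natrM n1; apply/eqP; ring.
have : (2 * n.-1 < \sum_a deg e a)%N by rewrite ltn_neqAle lb andbT eq_sym; apply/eqP.
rewrite -(ltr_nat R) natrM n1 => lt; rewrite -subr_gt0.
have -> : forall x y z : R, x + be * (y - D%:R) + z - (x + be * (2 * (n%:R - 1) - D%:R) + z)
  = be * (y - 2 * (n%:R - 1)) by move=> *; ring.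
by rewrite mulr_gt0 // subr_gt0.
Qed.

Lemma sombor_ge_total : total <= sombor e R.
Proof.
rewrite sombor_split; apply: le_trans (total_leif : total <= _) _.
by rewrite lerDl half_leftovers_ge0.
Qed.

Lemma sombor_eq_total_tight : sombor e R = total ->
  (\sum_a deg e a = 2 * n.-1)%N /\ forall a, a != v -> P (e a v) (deg e a).
Proof.
move=> Heq; have Hle : \sum_(a | a != v) vertex_weight R D (e a v) (deg e a) <= total.
  by move: Heq; rewrite sombor_split => <-; rewrite lerDl half_leftovers_ge0.
have /andP [/eqP Hsum /forall_inP HP] : (\sum_a deg e a == 2 * n.-1)%N &&
    [forall (a | a != v), P (e a v) (deg e a)].
  by rewrite -(eq_leif total_leif) eq_le Hle (total_leif : total <= _).
by split => // a /HP.
Qed.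

Lemma sombor_eq_total : (\sum_a deg e a = 2 * n.-1)%N ->
  (forall a, a != v -> P (e a v) (deg e a)) ->
  (forall a, a != v -> deg e a <= 2)%N -> sombor e R = total.
Proof.
move=> Hsum HP H2; rewrite sombor_split.
have -> : \sum_a \sum_(b | e a b) leftover a b = 0.
  by rewrite big1 // => a _; rewrite big1 // => b; exact: leftover_eq0.
rewrite mulr0 addr0.
apply/eqP; rewrite eq_sym (eq_leif total_leif) Hsum eqxx /=.
by apply/forall_inP => a /HP.
Qed.

End AffineBound.
End Decomposition.

Section MaxDegree.
Variable R : realType.
Variables (T : finType) (e : rel T).
Hypotheses (esym : symmetric e) (eirr : irreflexive e).
Hypothesis conn : connected_graph e.
Variable v : T.
Hypothesis Dv : deg e v = maxdeg e.
Hypothesis HD : (3 <= maxdeg e)%N.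

Local Notation D := (maxdeg e).
Local Notation n := #|T|.

Lemma deg_v_ge3 : (3 <= deg e v)%N. Proof. by rewrite Dv. Qed.

Lemma star_like_iff : star_like_tree e <->
  (\sum_x deg e x = 2 * n.-1)%N /\ (forall a, a != v -> deg e a <= 2)%N.
Proof.
rewrite /star_like_tree (tree_iff_deg_sum esym eirr v conn).
split=> [[Hsum Hone] | [Hsum small]]; split=> //.
  move=> a av; rewrite leqNgt; apply/negP => Ha.
  have : (#|pred2 a v| <= #|[pred x | 2 < deg e x]|)%N.
    apply: subset_leq_card; apply/subsetP => x.
    by rewrite !inE => /orP [] /eqP ->; rewrite ?Ha ?deg_v_ge3.
  by rewrite card2 av Hone.
rewrite (@eq_card _ _ (pred1 v)) ?card1 // => x; rewrite !inE.
by case: (eqVneq x v) => [->|xv]; rewrite ?eqxx ?deg_v_ge3 // ltnNge small.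
Qed.

Lemma max_vertex_unique : (forall a, a != v -> deg e a <= 2)%N ->
  forall w, deg e w = deg e v -> w = v.
Proof.
move=> small w Dw; apply/eqP; apply: contraT => wv.
by have := small w wv; rewrite Dw leqNgt deg_v_ge3.
Qed.

Lemma leaf_neighbours_count : (\sum_x deg e x = 2 * n.-1)%N ->
  (forall a, a != v -> deg e a <= 2)%N -> (n - 1 < 2 * deg e v)%N ->
  (forall a, a != v -> ~~ e v a -> deg e a = 1%N) <->
  #|[pred u | e v u && (deg e u == 1%N)]| = ((2 * deg e v).+1 - n)%N.
Proof.
move=> Hsum small Hn.
have Tn : (0 < n)%N by apply/card_gt0P; exists v.
set q := #|[pred u | e v u && (deg e u == 1%N)]|.
have pos := deg_pos esym (conn v).
have pointwise a : a != v -> (1 + e v a <= deg e a + (e v a && (deg e a == 1%N))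
    ?= iff (e v a || (deg e a == 1%N)))%N.
  move=> av; move: (small a av) (pos a av); rewrite /leqif.
  by case: (e v a) => /=; case: (deg e a) => [|[|[|]]].
have sum_lhs : (\sum_(a | a != v) (1 + e v a) = n.-1 + deg e v)%N.
  rewrite big_split /= sum1_card cardC1 degE [in RHS](bigD1 v) //= eirr.
  by congr (_ + _); apply: eq_bigr.
have sum_leaves : (\sum_(a | a != v) (e v a && (deg e a == 1%N)) = q)%N.
  rewrite /q -sum1_card [RHS]big_mkcond [RHS](bigD1 v) //= inE eirr add0n.
  by apply: eq_bigr => a _; rewrite inE; case: (_ && _).
have sum_rhs : (\sum_(a | a != v) (deg e a + (e v a && (deg e a == 1%N))) + deg e v
    = \sum_x deg e x + q)%N.
  by rewrite big_split /= sum_leaves [(\sum_x _)%N](bigD1 v) //=; lia.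
have n1 : n.-1.+1 = n := prednK Tn.
have [_ tight] := leqif_sum pointwise.
split=> [nonadj | Hq].
  suff : [forall (a | a != v), e v a || (deg e a == 1%N)].
    by rewrite -tight sum_lhs => /eqP; lia.
  apply/forall_inP => a av; case: (boolP (e v a)) => //= /(nonadj a av) ->.
  by [].
have : (\sum_(a | a != v) (1 + e v a) ==
        \sum_(a | a != v) (deg e a + (e v a && (deg e a == 1%N))))%N.
  by rewrite sum_lhs; apply/eqP; lia.
rewrite tight => /forall_inP Hall a av nav.
by have := Hall a av; rewrite (negbTE nav) => /eqP.
Qed.

(* Part (i): the first bound; it holds without assuming 2D <= n - 1. *)
Lemma sombor_bound_i :
  D%:R * (Num.sqrt (D%:R ^+ 2 + 4) + Num.sqrt 5)
               + 2 * (n%:R - 2 * D%:R - 1) * Num.sqrt 2 <= sombor e R /\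
  (sombor e R = D%:R * (Num.sqrt (D%:R ^+ 2 + 4) + Num.sqrt 5)
               + 2 * (n%:R - 2 * D%:R - 1) * Num.sqrt 2 <->
   star_like_tree e /\ (forall w u, deg e w = D -> e w u -> deg e u = 2%N)).
Proof.
rewrite -Dv -total1E.
have be_gt0 : 0 < beta1 R by rewrite /beta1; have := s2_bnd R; have := s5_bnd R; lra.
pose P (adj : bool) (d : nat) := if adj then d == 2%N else (d == 1%N) || (d == 2%N).
have Hv a : a != v -> affine (alpha1 R) (beta1 R) (gamma1 R (deg e v)) (e a v) (deg e a)
    <= vertex_weight R (deg e v) (e a v) (deg e a) ?= iff P (e a v) (deg e a).
  move=> av; rewrite /P; case: (e a v); last exact: bound1_nonadj.
  exact (bound1_adj R deg_v_ge3 (deg_pos esym (conn v) av)).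
split; first exact (sombor_ge_total esym eirr (conn v) be_gt0 Hv).
split=> [Heq | [Hst Hnb]].
  have [Hsum HP] := sombor_eq_total_tight esym eirr (conn v) be_gt0 Hv Heq.
  have small a : a != v -> (deg e a <= 2)%N.
    by move=> av; move: (HP a av); rewrite /P; case: (e a v) => [/eqP -> | /orP [] /eqP ->].
  split; first exact/star_like_iff.
  move=> w u Dw ewu; rewrite (max_vertex_unique small Dw) in ewu.
  have uv : u != v by apply: contraTneq ewu => ->; rewrite eirr.
  by move: (HP u uv); rewrite /P (esym u) ewu => /eqP.
have [Hsum small] := star_like_iff.1 Hst.
apply: (sombor_eq_total esym eirr (conn v) be_gt0 Hv Hsum _ small) => a av.
rewrite /P; case: (boolP (e a v)) => [eav | _]; first by apply/eqP/(Hnb v); rewrite // esym.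
by move: (small a av) (deg_pos esym (conn v) av); case: (deg e a) => [|[|[|]]].
Qed.

Lemma sombor_bound_ii : (n - 1 < 2 * D)%N ->
  (n%:R - 1 - D%:R) * (Num.sqrt (D%:R ^+ 2 + 4) + Num.sqrt 5)
               + (2 * D%:R - n%:R + 1) * Num.sqrt (D%:R ^+ 2 + 1) <= sombor e R /\
  (sombor e R = (n%:R - 1 - D%:R) * (Num.sqrt (D%:R ^+ 2 + 4) + Num.sqrt 5)
               + (2 * D%:R - n%:R + 1) * Num.sqrt (D%:R ^+ 2 + 1) <->
   star_like_tree e /\ (forall w, deg e w = D ->
     #|[pred u | e w u && (deg e u == 1%N)]| = ((2 * D).+1 - n)%N)).
Proof.
rewrite -Dv => Hn; rewrite -total2E.
have be_gt0 : 0 < beta2 R (deg e v).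
  by rewrite /beta2; have := sw_gap R deg_v_ge3; have := s2_bnd R; lra.
pose P (adj : bool) (d : nat) := if adj then (d <= 2)%N else d == 1%N.
have Hv a : a != v -> affine (alpha2 R (deg e v)) (beta2 R (deg e v)) (gamma2 R (deg e v))
    (e a v) (deg e a) <= vertex_weight R (deg e v) (e a v) (deg e a) ?= iff P (e a v) (deg e a).
  move=> av; rewrite /P; case: (e a v); last exact (bound2_nonadj R deg_v_ge3 _).
  exact (bound2_adj R deg_v_ge3 (deg_pos esym (conn v) av)).
split; first exact (sombor_ge_total esym eirr (conn v) be_gt0 Hv).
split=> [Heq | [Hst Hq]].
  have [Hsum HP] := sombor_eq_total_tight esym eirr (conn v) be_gt0 Hv Heq.
  have small a : a != v -> (deg e a <= 2)%N.
    by move=> av; move: (HP a av); rewrite /P; case: (e a v) => // /eqP ->.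
  split; first exact/star_like_iff.
  move=> w Dw; rewrite (max_vertex_unique small Dw).
  apply/(leaf_neighbours_count Hsum small Hn) => a av nav.
  by move: (HP a av); rewrite /P esym (negbTE nav) => /eqP.
have [Hsum small] := star_like_iff.1 Hst.
have nonadj := (leaf_neighbours_count Hsum small Hn).2 (Hq v erefl).
apply: (sombor_eq_total esym eirr (conn v) be_gt0 Hv Hsum _ small) => a av.
rewrite /P esym; case: (boolP (e v a)) => [_ | nav]; first exact: small.
by rewrite nonadj.
Qed.

End MaxDegree.

Lemma exists_max_vertex (T : finType) (e : rel T) :
  (0 < maxdeg e)%N -> exists v, deg e v = maxdeg e.
Proof.
move=> pos; have Tn : (0 < #|T|)%N.
  rewrite lt0n; apply: contraTneq pos => /card0_eq T0.
  by rewrite /maxdeg big1 // => x _; have := T0 x; rewrite !inE.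
by have [v Hv] := @bigop.eq_bigmax T (deg e) Tn; exists v.
Qed.

Theorem theorem2p2 (R : realType) (T : finType) (e : rel T)
  (Hsimple : simple_graph e) (Hconn : connected_graph e)
  (HD : (3 <= maxdeg e)%N) :
  let n := #|T| in
  let D := maxdeg e in
  ((2 * D <= n - 1)%N ->
     sombor e R >= D%:R * (Num.sqrt (D%:R ^+ 2 + 4) + Num.sqrt 5)
                   + 2 * (n%:R - 2 * D%:R - 1) * Num.sqrt 2 /\
     (sombor e R = D%:R * (Num.sqrt (D%:R ^+ 2 + 4) + Num.sqrt 5)
                   + 2 * (n%:R - 2 * D%:R - 1) * Num.sqrt 2 <->
      star_like_tree e /\
      (forall v u : T, deg e v = D -> e v u -> deg e u = 2%N))) /\
  ((n - 1 < 2 * D)%N ->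
     sombor e R >= (n%:R - 1 - D%:R) * (Num.sqrt (D%:R ^+ 2 + 4) + Num.sqrt 5)
                   + (2 * D%:R - n%:R + 1) * Num.sqrt (D%:R ^+ 2 + 1) /\
     (sombor e R = (n%:R - 1 - D%:R) * (Num.sqrt (D%:R ^+ 2 + 4) + Num.sqrt 5)
                   + (2 * D%:R - n%:R + 1) * Num.sqrt (D%:R ^+ 2 + 1) <->
      star_like_tree e /\
      (forall v : T, deg e v = D ->
         #|[pred u | e v u && (deg e u == 1%N)]| = ((2 * D).+1 - n)%N))).
Proof.
move=> n D; rewrite {}/n {}/D; have [esym eirr] := Hsimple.
have [v Dv] := exists_max_vertex (ltnW (ltnW HD)).
split=> [_ | Hn].
- exact (sombor_bound_i R esym eirr Hconn Dv HD).
- exact (sombor_bound_ii R esym eirr Hconn Dv HD Hn).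
Qed.
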